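(* The variety $\mathsf{V}(S_{(4,398)})$ is the ai-semiring variety defined by the identities $xy\approx yx$, $xy\approx xy+x$, $x^2+yz\approx x^2yz$, $xyz\approx xy+yz+xz$.
   Context: An ai-semiring is an algebra $(S,+,\cdot)$ with $(S,+)$ a semilattice, $(S,\cdot)$ a semigroup, and both distributive laws. $\mathsf{V}(S)$ is the variety generated by $S$; ''the ai-semiring variety defined by identities $\Sigma$'' is the class of all ai-semirings satisfying $\Sigma$. $S_{(4,398)}$ has carrier $\{1,2,3,4\}$; addition: $x+x=x$, $2+x=x$, $1+x=1$ for all $x$, $3+4=1$; multiplication (row $a$, column $b$ gives $a\cdot b$): row $1$: $1,1,1,1$; row $2$: $1,2,1,4$; row $3$: $1,1,1,1$; row $4$: $1,4,1,1$. *)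

Record aisemiring := AISemiring {
  car :> Type;
  sadd : car -> car -> car;
  smul : car -> car -> car;
  sadd_assoc : forall x y z, sadd x (sadd y z) = sadd (sadd x y) z;
  sadd_comm : forall x y, sadd x y = sadd y x;
  sadd_idem : forall x, sadd x x = x;
  smul_assoc : forall x y z, smul x (smul y z) = smul (smul x y) z;
  smul_addl : forall x y z, smul x (sadd y z) = sadd (smul x y) (smul x z);
  smul_addr : forall x y z, smul (sadd x y) z = sadd (smul x z) (smul y z)
}.

Arguments sadd {a} _ _.
Arguments smul {a} _ _.

(** Membership in the variety V(S) = HSP(S): T is a homomorphic image of a
    subalgebra of a direct power S^I (I an arbitrary index type). *)
Definition in_variety (S T : aisemiring) : Prop :=
  exists (I : Type) (B : (I -> S) -> Prop) (f : {x : I -> S | B x} -> T),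
    (forall x y, B x -> B y -> B (fun i => sadd (x i) (y i))) /\
    (forall x y, B x -> B y -> B (fun i => smul (x i) (y i))) /\
    (forall (x y : {x : I -> S | B x}) (Hxy : B (fun i => sadd (proj1_sig x i) (proj1_sig y i))),
       f (exist _ _ Hxy) = sadd (f x) (f y)) /\
    (forall (x y : {x : I -> S | B x}) (Hxy : B (fun i => smul (proj1_sig x i) (proj1_sig y i))),
       f (exist _ _ Hxy) = smul (f x) (f y)) /\
    (forall t : T, exists x, f x = t).

Definition satisfies_Sigma (T : aisemiring) : Prop :=
  (forall x y : T, smul x y = smul y x) /\
  (forall x y : T, smul x y = sadd (smul x y) x) /\
  (forall x y z : T, sadd (smul x x) (smul y z) = smul (smul (smul x x) y) z) /\
  (forall x y z : T, smul (smul x y) z = sadd (sadd (smul x y) (smul y z)) (smul x z)).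

Inductive four := e1 | e2 | e3 | e4.

Definition add4 (a b : four) : four :=
  match a, b with
  | e1, _ | _, e1 => e1
  | e2, x | x, e2 => x
  | e3, e3 => e3
  | e4, e4 => e4
  | e3, e4 | e4, e3 => e1
  end.

Definition mul4 (a b : four) : four :=
  match a, b with
  | e2, e2 => e2
  | e2, e4 => e4
  | e4, e2 => e4
  | _, _ => e1
  end.

Lemma add4_assoc : forall x y z, add4 x (add4 y z) = add4 (add4 x y) z.
Proof. destruct x, y, z; reflexivity. Qed.
Lemma add4_comm : forall x y, add4 x y = add4 y x.
Proof. destruct x, y; reflexivity. Qed.
Lemma add4_idem : forall x, add4 x x = x.
Proof. destruct x; reflexivity. Qed.
Lemma mul4_assoc : forall x y z, mul4 x (mul4 y z) = mul4 (mul4 x y) z.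
Proof. destruct x, y, z; reflexivity. Qed.
Lemma mul4_addl : forall x y z, mul4 x (add4 y z) = add4 (mul4 x y) (mul4 x z).
Proof. destruct x, y, z; reflexivity. Qed.
Lemma mul4_addr : forall x y z, mul4 (add4 x y) z = add4 (mul4 x z) (mul4 y z).
Proof. destruct x, y, z; reflexivity. Qed.

Definition S4398 : aisemiring :=
  AISemiring four add4 mul4 add4_assoc add4_comm add4_idem
    mul4_assoc mul4_addl mul4_addr.

From Stdlib Require Import ClassicalEpsilon FunctionalExtensionality ProofIrrelevance.

(* By the HSP theorem, T lies in V(S) exactly when every identity of S, with
   the elements of T as variables, holds in T.  S4398 satisfies the four
   identities by computation.  Conversely, under them every term is the sum of
   its letters and of the products a b of letters that are multiplied together
   somewhere in it.  Evaluating in S4398 with one letter sent to 3, or two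
   letters sent to 4, and all other letters to 2 reads off which letters occur,
   which occur inside a product and which pairs are multiplied -- except that
   a b cannot be told apart from a a or b b; this is repaired by
   a a + b c = a a b c, which lies above a b. *)

Inductive term (X : Type) : Type :=
| Var (x : X)
| Add (t s : term X)
| Mul (t s : term X).
Arguments Var {X} x.
Arguments Add {X} t s.
Arguments Mul {X} t s.

Fixpoint eval {A : aisemiring} {X : Type} (v : X -> A) (t : term X) : A :=
  match t with
  | Var x => v x
  | Add t s => sadd (eval v t) (eval v s)
  | Mul t s => smul (eval v t) (eval v s)
  end.

Definition holds (A : aisemiring) {X : Type} (t u : term X) : Prop :=
  forall v : X -> A, eval v t = eval v u.

Section VarietyMember.

Variables (S T : aisemiring) (I : Type) (B : (I -> S) -> Prop).
Hypothesis B_add : forall x y, B x -> B y -> B (fun i => sadd (x i) (y i)).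
Hypothesis B_mul : forall x y, B x -> B y -> B (fun i => smul (x i) (y i)).
Variable f : {x : I -> S | B x} -> T.
Hypothesis f_add : forall (x y : {x : I -> S | B x})
  (Hxy : B (fun i => sadd (proj1_sig x i) (proj1_sig y i))),
  f (exist _ _ Hxy) = sadd (f x) (f y).
Hypothesis f_mul : forall (x y : {x : I -> S | B x})
  (Hxy : B (fun i => smul (proj1_sig x i) (proj1_sig y i))),
  f (exist _ _ Hxy) = smul (f x) (f y).
Hypothesis f_surj : forall t : T, exists x, f x = t.

Fixpoint eval_sub {X : Type} (p : X -> {x : I -> S | B x}) (t : term X) :
    {x : I -> S | B x} :=
  match t with
  | Var x => p x
  | Add t s =>
      exist B _ (B_add _ _ (proj2_sig (eval_sub p t)) (proj2_sig (eval_sub p s)))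
  | Mul t s =>
      exist B _ (B_mul _ _ (proj2_sig (eval_sub p t)) (proj2_sig (eval_sub p s)))
  end.

Lemma proj1_eval_sub {X : Type} (p : X -> {x : I -> S | B x}) (t : term X) :
  proj1_sig (eval_sub p t) = fun i => eval (fun x => proj1_sig (p x) i) t.
Proof.
  induction t as [x | t IHt s IHs | t IHt s IHs]; simpl;
    try rewrite IHt, IHs; reflexivity.
Qed.

Lemma f_eval_sub {X : Type} (p : X -> {x : I -> S | B x}) (t : term X) :
  f (eval_sub p t) = eval (fun x => f (p x)) t.
Proof.
  induction t as [x | t IHt s IHs | t IHt s IHs]; simpl.
  - reflexivity.
  - rewrite f_add, IHt, IHs; reflexivity.
  - rewrite f_mul, IHt, IHs; reflexivity.
Qed.

Lemma holds_image {X : Type} (t u : term X) : holds S t u -> holds T t u.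
Proof.
  intros Htu w.
  pose (p x := proj1_sig (constructive_indefinite_description _ (f_surj (w x)))).
  replace w with (fun x => f (p x)).
  2:{ apply functional_extensionality; intro x.
      exact (proj2_sig (constructive_indefinite_description _ (f_surj (w x)))). }
  rewrite <- !f_eval_sub; f_equal.
  apply (eq_sig_hprop (fun _ => proof_irrelevance _)).
  rewrite !proj1_eval_sub; apply functional_extensionality; intro i; apply Htu.
Qed.

End VarietyMember.

(* The free algebra of V(S) on the generators T, realised as the term
   functions inside the power S^(T -> S). *)
Lemma in_variety_of_holds (S T : aisemiring) :
  (forall t u : term T, holds S t u -> holds T t u) -> in_variety S T.
Proof.
  intros H.
  pose (term_fun g := exists t : term T, g = fun v : T -> S => eval v t).
  pose (term_of (p : {g | term_fun g}) :=
          proj1_sig (constructive_indefinite_description _ (proj2_sig p))).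
  assert (Hterm : forall p, proj1_sig p = fun v => eval v (term_of p)).
  { intro p; exact (proj2_sig (constructive_indefinite_description _ (proj2_sig p))). }
  assert (Hwd : forall p t, proj1_sig p = (fun v => eval v t) ->
                            eval (fun x => x) (term_of p) = eval (fun x => x) t).
  { intros p t Hp; apply H; intro v.
    change (eval v (term_of p)) with ((fun v => eval v (term_of p)) v).
    rewrite <- Hterm, Hp; reflexivity. }
  exists (T -> S), term_fun, (fun p => eval (fun x => x) (term_of p)).
  repeat split.
  - intros x y [t ->] [s ->]; exists (Add t s); reflexivity.
  - intros x y [t ->] [s ->]; exists (Mul t s); reflexivity.
  - intros x y Hxy.
    apply (Hwd _ (Add (term_of x) (term_of y))); simpl.
    rewrite (Hterm x), (Hterm y); reflexivity.
  - intros x y Hxy.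
    apply (Hwd _ (Mul (term_of x) (term_of y))); simpl.
    rewrite (Hterm x), (Hterm y); reflexivity.
  - intro t.
    exists (exist term_fun (fun v => v t) (ex_intro _ (Var t) eq_refl)).
    apply (Hwd _ (Var t)); reflexivity.
Qed.

Theorem in_variety_iff_holds (S T : aisemiring) :
  in_variety S T <-> (forall t u : term T, holds S t u -> holds T t u).
Proof.
  split.
  - intros (I & B & f & B_add & B_mul & f_add & f_mul & f_surj) t u.
    eapply holds_image; eassumption.
  - apply in_variety_of_holds.
Qed.

Fixpoint occurs {X : Type} (t : term X) (a : X) : Prop :=
  match t with
  | Var x => x = a
  | Add t s | Mul t s => occurs t a \/ occurs s a
  end.

Fixpoint occurs_in_product {X : Type} (t : term X) (a : X) : Prop :=
  match t with
  | Var _ => False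
  | Add t s => occurs_in_product t a \/ occurs_in_product s a
  | Mul t s => occurs t a \/ occurs s a
  end.

Fixpoint product_pair {X : Type} (t : term X) (a b : X) : Prop :=
  match t with
  | Var _ => False
  | Add t s => product_pair t a b \/ product_pair s a b
  | Mul t s => product_pair t a b \/ product_pair s a b \/
               (occurs t a /\ occurs s b) \/ (occurs t b /\ occurs s a)
  end.

Definition pair_among {X : Type} (t : term X) (a b : X) : Prop :=
  product_pair t a b \/ product_pair t a a \/ product_pair t b b.

Lemma occurs_exists {X : Type} (t : term X) : exists a, occurs t a.
Proof.
  induction t as [x | t [a Ha] s _ | t [a Ha] s _].
  - exists x; reflexivity.
  - exists a; left; exact Ha.
  - exists a; left; exact Ha.
Qed.

Lemma occurs_in_product_occurs {X : Type} (t : term X) a :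
  occurs_in_product t a -> occurs t a.
Proof. induction t; simpl; tauto. Qed.

Lemma product_pair_occurs {X : Type} (t : term X) a b :
  product_pair t a b -> occurs t a /\ occurs t b.
Proof. induction t; simpl; tauto. Qed.

Lemma product_pair_occurs_in_product {X : Type} (t : term X) a b :
  product_pair t a b -> occurs_in_product t a /\ occurs_in_product t b.
Proof.
  induction t as [x | t IHt s IHs | t IHt s IHs]; simpl; try tauto.
  pose proof (product_pair_occurs t a b); pose proof (product_pair_occurs s a b).
  tauto.
Qed.

Lemma occurs_in_product_pair {X : Type} (t : term X) a :
  occurs_in_product t a -> exists b, product_pair t a b.
Proof.
  induction t as [x | t IHt s IHs | t IHt s IHs]; simpl.
  - contradiction.
  - intros [Ha | Ha]; [destruct (IHt Ha) as [b Hb] | destruct (IHs Ha) as [b Hb]];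
      exists b; tauto.
  - intros [Ha | Ha]; [destruct (occurs_exists s) as [b Hb] | destruct (occurs_exists t) as [b Hb]];
      exists b; tauto.
Qed.

(* 2 is the additive identity of S4398 and a multiplicative identity on {2, 4},
   while 3 x = 1 for all x and 4 4 = 1. *)
Definition mark3 {X : Type} (a : X) (x : X) : S4398 :=
  if excluded_middle_informative (x = a) then e3 else e2.

Definition mark4 {X : Type} (a b : X) (x : X) : S4398 :=
  if excluded_middle_informative (x = a \/ x = b) then e4 else e2.

Lemma eval_mark3 {X : Type} (a : X) (t : term X) :
  (~ occurs t a /\ eval (mark3 a) t = e2) \/
  (occurs t a /\ ~ occurs_in_product t a /\ eval (mark3 a) t = e3) \/
  (occurs_in_product t a /\ eval (mark3 a) t = e1).
Proof.
  induction t as [x | t IHt s IHs | t IHt s IHs]; simpl.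
  { unfold mark3; destruct (excluded_middle_informative (x = a)); tauto. }
  all: pose proof (occurs_in_product_occurs t a); pose proof (occurs_in_product_occurs s a);
    destruct IHt as [[? E1] | [[? [? E1]] | [? E1]]];
    destruct IHs as [[? E2] | [[? [? E2]] | [? E2]]]; rewrite E1, E2; simpl; tauto.
Qed.

Lemma eval_mark4 {X : Type} (a b : X) (t : term X) :
  (~ occurs t a /\ ~ occurs t b /\ eval (mark4 a b) t = e2) \/
  ((occurs t a \/ occurs t b) /\ ~ pair_among t a b /\ eval (mark4 a b) t = e4) \/
  (pair_among t a b /\ eval (mark4 a b) t = e1).
Proof.
  unfold pair_among.
  induction t as [x | t IHt s IHs | t IHt s IHs]; simpl.
  { unfold mark4; destruct (excluded_middle_informative (x = a \/ x = b)); tauto. }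
  all: pose proof (product_pair_occurs t a b); pose proof (product_pair_occurs s a b);
    pose proof (product_pair_occurs t a a); pose proof (product_pair_occurs s a a);
    pose proof (product_pair_occurs t b b); pose proof (product_pair_occurs s b b);
    destruct IHt as [[? [? E1]] | [[? [? E1]] | [? E1]]];
    destruct IHs as [[? [? E2]] | [[? [? E2]] | [? E2]]]; rewrite E1, E2; simpl; tauto.
Qed.

Lemma occurs_iff_mark3 {X : Type} (t : term X) a :
  occurs t a <-> eval (mark3 a) t <> e2.
Proof.
  pose proof (occurs_in_product_occurs t a).
  destruct (eval_mark3 a t) as [[? E] | [[? [? E]] | [? E]]]; rewrite E;
    split; intro; solve [discriminate | congruence | tauto].
Qed.

Lemma occurs_in_product_iff_mark3 {X : Type} (t : term X) a :
  occurs_in_product t a <-> eval (mark3 a) t = e1.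
Proof.
  pose proof (occurs_in_product_occurs t a).
  destruct (eval_mark3 a t) as [[? E] | [[? [? E]] | [? E]]]; rewrite E;
    split; intro; solve [discriminate | tauto].
Qed.

Lemma pair_among_iff_mark4 {X : Type} (t : term X) a b :
  pair_among t a b <-> eval (mark4 a b) t = e1.
Proof.
  pose proof (product_pair_occurs t a b); pose proof (product_pair_occurs t a a);
    pose proof (product_pair_occurs t b b).
  destruct (eval_mark4 a b t) as [[? [? E]] | [[? [? E]] | [? E]]];
    unfold pair_among in *; rewrite E;
    split; intro; solve [discriminate | tauto].
Qed.

Definition sle {A : aisemiring} (x y : A) : Prop := sadd x y = y.

Section Order.

Variable A : aisemiring.
Implicit Types x y z a b : A.

Lemma sle_trans x y z : sle x y -> sle y z -> sle x z.
Proof. unfold sle; intros Hxy Hyz; rewrite <- Hyz, sadd_assoc, Hxy; reflexivity. Qed.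

Lemma sle_addl x y : sle x (sadd x y).
Proof. unfold sle; rewrite sadd_assoc, sadd_idem; reflexivity. Qed.

Lemma sle_addr x y : sle y (sadd x y).
Proof. rewrite sadd_comm; apply sle_addl. Qed.

Lemma sle_add x y z : sle x z -> sle y z -> sle (sadd x y) z.
Proof. unfold sle; intros Hx Hy; rewrite <- sadd_assoc, Hy, Hx; reflexivity. Qed.

Lemma sle_antisym x y : sle x y -> sle y x -> x = y.
Proof. unfold sle; intros Hxy Hyx; rewrite <- Hxy, <- Hyx at 1; apply sadd_comm. Qed.

Lemma sle_mul a b x y : sle a x -> sle b y -> sle (smul a b) (smul x y).
Proof.
  intros Hx Hy; rewrite <- Hx, <- Hy, smul_addr, !smul_addl.
  apply sle_trans with (sadd (smul a b) (smul a y)); apply sle_addl.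
Qed.

End Order.

Section SigmaCompleteness.

Variable T : aisemiring.
Hypothesis HT : satisfies_Sigma T.

Lemma Sigma_mulC (x y : T) : smul x y = smul y x.
Proof. apply HT. Qed.

Lemma Sigma_sle_mull (x y : T) : sle x (smul x y).
Proof. unfold sle; rewrite sadd_comm; symmetry; apply HT. Qed.

Lemma Sigma_sle_mulr (x y : T) : sle y (smul x y).
Proof. rewrite Sigma_mulC; apply Sigma_sle_mull. Qed.

Lemma Sigma_mul3 (x y z : T) :
  smul (smul x y) z = sadd (sadd (smul x y) (smul y z)) (smul x z).
Proof. apply HT. Qed.

(* a a + b c = a a b c lies above a a b = a a + a b + a b. *)
Lemma Sigma_sle_mul_square (a b c z : T) :
  sle (smul a a) z -> sle (smul b c) z -> sle (smul a b) z.
Proof.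
  intros Ha Hbc.
  assert (Haabc : sle (smul (smul (smul a a) b) c) z).
  { destruct HT as (_ & _ & Hsq & _); rewrite <- Hsq; apply sle_add; assumption. }
  apply sle_trans with (smul (smul a a) b).
  - rewrite Sigma_mul3; apply sle_addr.
  - eapply sle_trans; [apply Sigma_sle_mull | exact Haabc].
Qed.

Variables (X : Type) (v : X -> T).

Lemma sle_var_eval t a : occurs t a -> sle (v a) (eval v t).
Proof.
  induction t as [x | t IHt s IHs | t IHt s IHs]; simpl.
  - intros ->; apply sadd_idem.
  - intros [Ha | Ha]; [eapply sle_trans; [apply IHt, Ha | apply sle_addl]
                      |eapply sle_trans; [apply IHs, Ha | apply sle_addr]].
  - intros [Ha | Ha]; [eapply sle_trans; [apply IHt, Ha | apply Sigma_sle_mull]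
                      |eapply sle_trans; [apply IHs, Ha | apply Sigma_sle_mulr]].
Qed.

Lemma sle_pair_eval t a b : product_pair t a b -> sle (smul (v a) (v b)) (eval v t).
Proof.
  induction t as [x | t IHt s IHs | t IHt s IHs]; simpl.
  - contradiction.
  - intros [Hab | Hab]; [eapply sle_trans; [apply IHt, Hab | apply sle_addl]
                        |eapply sle_trans; [apply IHs, Hab | apply sle_addr]].
  - intros [Hab | [Hab | [[Ha Hb] | [Hb Ha]]]].
    + eapply sle_trans; [apply IHt, Hab | apply Sigma_sle_mull].
    + eapply sle_trans; [apply IHs, Hab | apply Sigma_sle_mulr].
    + apply sle_mul; apply sle_var_eval; assumption.
    + rewrite (Sigma_mulC (v a)); apply sle_mul; apply sle_var_eval; assumption.
Qed.

Lemma sle_mul_eval_l (x : T) s z :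
  sle (eval v s) z -> (forall b, occurs s b -> sle (smul x (v b)) z) ->
  sle (smul x (eval v s)) z.
Proof.
  induction s as [y | s1 IH1 s2 IH2 | s1 IH1 s2 IH2]; simpl; intros Hs Hx.
  - apply Hx; reflexivity.
  - rewrite smul_addl; apply sle_add.
    + apply IH1; [eapply sle_trans; [apply sle_addl | exact Hs] | auto].
    + apply IH2; [eapply sle_trans; [apply sle_addr | exact Hs] | auto].
  - rewrite smul_assoc, Sigma_mul3; apply sle_add; [apply sle_add |].
    + apply IH1; [eapply sle_trans; [apply Sigma_sle_mull | exact Hs] | auto].
    + exact Hs.
    + apply IH2; [eapply sle_trans; [apply Sigma_sle_mulr | exact Hs] | auto].
Qed.

Lemma sle_mul_eval u s z :
  sle (eval v u) z -> sle (eval v s) z ->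
  (forall a b, occurs u a -> occurs s b -> sle (smul (v a) (v b)) z) ->
  sle (smul (eval v u) (eval v s)) z.
Proof.
  induction u as [x | u1 IH1 u2 IH2 | u1 IH1 u2 IH2]; simpl; intros Hu Hs Huv.
  - apply sle_mul_eval_l; auto.
  - rewrite smul_addr; apply sle_add.
    + apply IH1; [eapply sle_trans; [apply sle_addl | exact Hu] | auto | auto].
    + apply IH2; [eapply sle_trans; [apply sle_addr | exact Hu] | auto | auto].
  - rewrite Sigma_mul3; apply sle_add; [apply sle_add |].
    + exact Hu.
    + apply IH2; [eapply sle_trans; [apply Sigma_sle_mulr | exact Hu] | auto | auto].
    + apply IH1; [eapply sle_trans; [apply Sigma_sle_mull | exact Hu] | auto | auto].
Qed.

Lemma eval_sle t z :
  (forall a, occurs t a -> sle (v a) z) ->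
  (forall a b, product_pair t a b -> sle (smul (v a) (v b)) z) ->
  sle (eval v t) z.
Proof.
  induction t as [x | t IHt s IHs | t IHt s IHs]; simpl; intros Hocc Hpair.
  - apply Hocc; reflexivity.
  - apply sle_add; [apply IHt | apply IHs]; auto.
  - apply sle_mul_eval; [apply IHt | apply IHs | intros a b Ha Hb; apply Hpair]; auto.
Qed.

Lemma holds_S4398_sle t u : holds S4398 t u -> sle (eval v u) (eval v t).
Proof.
  intros Htu; apply eval_sle.
  - intros a Ha; apply sle_var_eval.
    apply occurs_iff_mark3; rewrite Htu; apply occurs_iff_mark3, Ha.
  - intros a b Hab.
    assert (Hamong : pair_among t a b).
    { apply pair_among_iff_mark4; rewrite Htu; apply pair_among_iff_mark4; left; exact Hab. }
    destruct (product_pair_occurs_in_product u a b Hab) as [Ha Hb].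
    assert (Hin : forall c, occurs_in_product u c -> exists d, product_pair t c d).
    { intros c Hc; apply occurs_in_product_pair.
      apply occurs_in_product_iff_mark3; rewrite Htu; apply occurs_in_product_iff_mark3, Hc. }
    destruct Hamong as [Ht | [Ht | Ht]].
    + apply sle_pair_eval, Ht.
    + destruct (Hin b Hb) as [d Hd].
      apply Sigma_sle_mul_square with (v d); apply sle_pair_eval; assumption.
    + destruct (Hin a Ha) as [d Hd].
      rewrite Sigma_mulC; apply Sigma_sle_mul_square with (v d);
        apply sle_pair_eval; assumption.
Qed.

End SigmaCompleteness.

Lemma Sigma_complete (T : aisemiring) {X : Type} (t u : term X) :
  satisfies_Sigma T -> holds S4398 t u -> holds T t u.
Proof.
  intros HT Htu v; apply sle_antisym; apply holds_S4398_sle; try assumption.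
  intro w; symmetry; apply Htu.
Qed.

Lemma S4398_satisfies_Sigma : satisfies_Sigma S4398.
Proof.
  repeat split; intros x y; try intros z; destruct x, y; try destruct z; reflexivity.
Qed.

Lemma satisfies_Sigma_of_holds (T : aisemiring) :
  (forall t u : term T, holds S4398 t u -> holds T t u) -> satisfies_Sigma T.
Proof.
  intros H; destruct S4398_satisfies_Sigma as (Scomm & Sabs & Ssq & Smul3).
  repeat split.
  - intros x y.
    exact (H (Mul (Var x) (Var y)) (Mul (Var y) (Var x))
             (fun v => Scomm (v x) (v y)) (fun x => x)).
  - intros x y.
    exact (H (Mul (Var x) (Var y)) (Add (Mul (Var x) (Var y)) (Var x))
             (fun v => Sabs (v x) (v y)) (fun x => x)).
  - intros x y z.
    exact (H (Add (Mul (Var x) (Var x)) (Mul (Var y) (Var z)))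
             (Mul (Mul (Mul (Var x) (Var x)) (Var y)) (Var z))
             (fun v => Ssq (v x) (v y) (v z)) (fun x => x)).
  - intros x y z.
    exact (H (Mul (Mul (Var x) (Var y)) (Var z))
             (Add (Add (Mul (Var x) (Var y)) (Mul (Var y) (Var z))) (Mul (Var x) (Var z)))
             (fun v => Smul3 (v x) (v y) (v z)) (fun x => x)).
Qed.

Theorem proposition6p13 :
  forall T : aisemiring, in_variety S4398 T <-> satisfies_Sigma T.
Proof.
  intros T; rewrite in_variety_iff_holds; split.
  - apply satisfies_Sigma_of_holds.
  - intros HT t u; apply Sigma_complete, HT.
Qed.
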